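(* Let $s\le\ell$ be positive integers and $\tau\in\mathbb{Z}_{\ge0}$. Then a family $\lambda_{\mathbf{i}},\psi_{\mathbf{j}}\in\mathcal{R}$ ($\mathbf{i}\in\mathcal{I},\mathbf{j}\in\mathcal{J}$) is a solution of degree $\tau$ of Problem 1 if and only if the family of polynomials defined by $(\lambda_{\mathbf{i},0},\dots,\lambda_{\mathbf{i},q-1})=\nu(\lambda_{\mathbf{i}})$ and $(\psi_{\mathbf{j},0},\dots,\psi_{\mathbf{j},q-1})=\nu(\psi_{\mathbf{j}})$ is a monic solution of degree $\tau$ of Problem 2.
   Context: Let $q$ be a prime power; the Hermitian curve over $\mathbb{F}_{q^2}$ has affine equation $Y^q+Y=X^{q+1}$, genus $g=\tfrac12q(q-1)$, affine rational points $P_1,\dots,P_n$ ($n=q^3$) and point at infinity $P_\infty$. $\mathcal{R}=\bigcup_{m\ge0}\mathcal{L}(mP_\infty)=\mathbb{F}_{q^2}[X,Y]/(Y^q+Y-X^{q+1})$ with basis $\{X^iY^j:i\ge0,0\le j<q\}$; $\deg_{\mathcal{H}}f=-v_{P_\infty}(f)$, so $\deg_{\mathcal{H}}(X^iY^j)=iq+j(q+1)$; $f\ne0$ is monic if the coefficient of its basis monomial of largest $\deg_{\mathcal{H}}$ is $1$. Fix integers $h\ge1$ and $m_{\mathrm H}$ with $2(g-1)<m_{\mathrm H}<n$. For a received word $\mathbf{r}=(r_{i,j})\in\mathbb{F}_{q^2}^{h\times n}$ let $\mathbf{R}=(R_1,\dots,R_h)$, $R_i\in\mathcal{R}$, $\deg_{\mathcal{H}}R_i<n+2g$,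 $R_i(P_j)=r_{i,j}$; $G=X^{q^2}-X$. For $\mathbf{i},\mathbf{j}\in\mathbb{Z}_{\ge0}^h$: $|\mathbf{i}|=\sum_\mu i_\mu$, $\mathbf{i}\preceq\mathbf{j}$ componentwise, $\mathbf{a}^{\mathbf{i}}=\prod_\mu a_\mu^{i_\mu}$, $\binom{\mathbf{j}}{\mathbf{i}}=\prod_\mu\binom{j_\mu}{i_\mu}$. Let $\mathcal{I}=\{\mathbf{i}:|\mathbf{i}|<s\}$, $\mathcal{J}=\{\mathbf{j}:1\le|\mathbf{j}|\le\ell\}$, $A_{\mathbf{i},\mathbf{j}}=\binom{\mathbf{j}}{\mathbf{i}}\mathbf{R}^{\mathbf{j}-\mathbf{i}}G^{|\mathbf{i}|}$ ($=0$ if $\mathbf{i}\not\preceq\mathbf{j}$). Problem 1: a solution is a family $\lambda_{\mathbf{i}},\psi_{\mathbf{j}}\in\mathcal{R}$ with $\lambda_{\mathbf{0}}$ monic, $\psi_{\mathbf{j}}=\sum_{\mathbf{i}\in\mathcal{I}}\lambda_{\mathbf{i}}A_{\mathbf{i},\mathbf{j}}$ for $|\mathbf{j}|<s$, $\psi_{\mathbf{j}}\equiv\sum_{\mathbf{i}\in\mathcal{I}}\lambda_{\mathbf{i}}A_{\mathbf{i},\mathbf{j}}\bmod G^s$ for $|\mathbf{j}|\ge s$, $\deg_{\mathcal{H}}\lambda_{\mathbf{0}}\ge\deg_{\mathcal{H}}\lambda_{\mathbf{i}}-|\mathbf{i}|(2g-1)$ ($\mathbf{i}\in\mathcal{I}$),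 $\deg_{\mathcal{H}}\lambda_{\mathbf{0}}\ge\deg_{\mathcal{H}}\psi_{\mathbf{j}}-|\mathbf{j}|m_{\mathrm H}$ ($\mathbf{j}\in\mathcal{J}$); its degree is $\deg_{\mathcal{H}}\lambda_{\mathbf{0}}$. Vector representation: every $a\in\mathcal{R}$ is uniquely $a=\sum_{\iota=0}^{q-1}a_\iota Y^\iota$ with $a_\iota\in\mathbb{F}_{q^2}[X]$; $\nu(a)=(a_0,\dots,a_{q-1})$. Let $\mu(b)\in\mathbb{F}_{q^2}[X]^{q\times(2q-1)}$ have $(\iota,\iota+k)$ entry $b_k$ for $0\le\iota\le q-1$, $0\le k\le q-1$ and zeros elsewhere (rows indexed $0..q-1$, columns $0..2q-2$), and let $\Xi\in\mathbb{F}_{q^2}[X]^{(2q-1)\times q}$ have rows $0..q-1$ equal to the $q\times q$ identity and, for $0\le k\le q-2$, row $q+k$ with entry $X^{q+1}$ in column $k$, $-1$ in column $k+1$, zeros elsewhere. Then $\nu(ab)=\nu(a)\mu(b)\Xi$. Put $\hat A_{\mathbf{i},\mathbf{j}}=\mu(A_{\mathbf{i},\mathbf{j}})\Xi\in\mathbb{F}_{q^2}[X]^{q\times q}$. Write $[q)=\{0,\dots,q-1\}$. Problem 2: find $\lambda_{\mathbf{i},\iota},\psi_{\mathbf{j},\kappa}\in\mathbb{F}_{q^2}[X]$ ($\mathbf{i}\in\mathcal{I},\mathbf{j}\in\mathcal{J},\iota,\kappa\in[q)$), not all zero, such that, with $D=\max_{\iota\in[q)}\{q\deg\lambda_{\mathbf{0},\iota}+\iota(q+1)\}$: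 $\psi_{\mathbf{j},\kappa}=\sum_{\mathbf{i}\in\mathcal{I}}\sum_{\iota=0}^{q-1}\lambda_{\mathbf{i},\iota}(\hat A_{\mathbf{i},\mathbf{j}})_{\iota,\kappa}$ for $1\le|\mathbf{j}|<s$; $\psi_{\mathbf{j},\kappa}\equiv\sum_{\mathbf{i}\in\mathcal{I}}\sum_{\iota=0}^{q-1}\lambda_{\mathbf{i},\iota}(\hat A_{\mathbf{i},\mathbf{j}})_{\iota,\kappa}\bmod G^s$ for $s\le|\mathbf{j}|\le\ell$; $D\ge q\deg\lambda_{\mathbf{i},\iota}+\iota(q+1)-|\mathbf{i}|(2g-1)$ for all $\mathbf{i}\in\mathcal{I},\iota\in[q)$; $D\ge q\deg\psi_{\mathbf{j},\kappa}+\kappa(q+1)-|\mathbf{j}|m_{\mathrm H}$ for all $\mathbf{j}\in\mathcal{J},\kappa\in[q)$ (with $\deg 0=-\infty$). The degree of such a solution is $D$; it is monic if the leading coefficient of the $\lambda_{\mathbf{0},\iota}$ attaining the maximum in $D$ is $1$. *)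

From HB Require Import structures.
From mathcomp Require Import all_boot all_order all_algebra.
Set Implicit Arguments. Unset Strict Implicit. Unset Printing Implicit Defensive.
Import Order.TTheory GRing.Theory Num.Theory.
Local Open Scope ring_scope.

(* Bivariate polynomials: outer variable Y, inner variable X.
   The ring  R = F[X,Y]/(Y^q + Y - X^(q+1))  is modelled as {poly {poly F}}
   modulo the (Y-monic) polynomial herm q; every element of R has the reduced
   representative  nu q a  (remainder of division by herm q in Y), i.e.
   the vector representation  nu(a) = (a_0,...,a_{q-1}). *)
Notation BP F := {poly {poly F}}.

Section Hermitian.
Variable F : fieldType.
Variable q : nat.

Definition hX : BP F := ('X)%:P.
Definition hY : BP F := 'X.
Definition herm : BP F := hY ^+ q + hY - hX ^+ q.+1.

Definition nu (a : BP F) : BP F := Pdiv.Ring.rmodp a herm.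
Definition nuc (a : BP F) (k : nat) : {poly F} := (nu a)`_k.
Definition eqR (a b : BP F) : Prop := nu (a - b) = 0.
Definition dvdR (d a : BP F) : Prop := exists c : BP F, eqR a (d * c).
Definition coefH (a : BP F) (i j : nat) : F := (nuc a j)`_i.
Definition degH (a : BP F) : nat :=
  \max_(j < q) \max_(i < size (nuc a j) | coefH a i j != 0%R) (i * q + j * q.+1)%N.
Definition monicR (a : BP F) : Prop :=
  nu a != 0 /\
  forall i j : nat, (j < q)%N -> coefH a i j != 0 ->
    (i * q + j * q.+1)%N = degH a -> coefH a i j = 1.

Definition evalP (a : BP F) (P : F * F) : F := (a.[(P.2)%:P]).[P.1].

Definition Gpol : {poly F} := 'X^(q ^ 2)%N - 'X.
Definition Gb : BP F := Gpol%:P.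

Definition genus : nat := ((q * (q - 1))./2)%N.

Definition muM (b : BP F) : 'M[{poly F}]_(q, q.*2.-1) :=
  \matrix_(r < q, c < q.*2.-1)
     (if ((r <= c) && (c < r + q))%N then nuc b (c - r) else 0).
Definition XiM : 'M[{poly F}]_(q.*2.-1, q) :=
  \matrix_(r < q.*2.-1, c < q)
     (if (r < q)%N then ((r : nat) == c)%:R
      else if (c : nat) == (r - q)%N then 'X^(q.+1)
      else if (c : nat) == (r - q).+1 then -1 else 0).
End Hermitian.

(* multi-indices in Z_{>=0}^h; components bounded by l (enough for I and J, as s <= l) *)
Definition mi (h l : nat) := {ffun 'I_h -> 'I_l.+1}.
Definition mnorm h l (i : mi h l) : nat := (\sum_(mu < h) (i mu : nat))%N.
Definition mle h l (i j : mi h l) : bool := [forall mu, (i mu <= j mu)%N].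
Definition mzero h l : mi h l := [ffun => ord0].

Section Problems.
Variables (F : fieldType) (q h l s : nat) (mH : int) (Rv : 'I_h -> BP F).

Definition Amat (i j : mi h l) : BP F :=
  if mle i j then
    ((\prod_(mu < h) 'C(j mu, i mu))%N)%:R *
    (\prod_(mu < h) (Rv mu) ^+ (j mu - i mu)%N) * (Gb F q) ^+ (mnorm i)
  else 0.

Definition inI (i : mi h l) : bool := (mnorm i < s)%N.
Definition inJ (j : mi h l) : bool := (1 <= mnorm j <= l)%N.
Definition twog1 : int := (2 * genus q)%N%:Z - 1.

(* Problem 1: solution of degree tau; deg_H 0 = -oo, so constraints on
   zero elements are vacuous *)
Definition sol1 (lam psi : mi h l -> BP F) (tau : nat) : Prop :=
  monicR q (lam (mzero h l)) /\
  (forall j, inJ j -> (mnorm j < s)%N ->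
     eqR q (psi j) (\sum_(i | inI i) lam i * Amat i j)) /\
  (forall j, inJ j -> (s <= mnorm j)%N ->
     dvdR q ((Gb F q) ^+ s) (psi j - \sum_(i | inI i) lam i * Amat i j)) /\
  (forall i, inI i -> nu q (lam i) != 0 ->
     (degH q (lam i))%:Z - (mnorm i)%:Z * twog1 <= (degH q (lam (mzero h l)))%:Z) /\
  (forall j, inJ j -> nu q (psi j) != 0 ->
     (degH q (psi j))%:Z - (mnorm j)%:Z * mH <= (degH q (lam (mzero h l)))%:Z) /\
  degH q (lam (mzero h l)) = tau.

Definition hatA (i j : mi h l) : 'M[{poly F}]_q := muM q (Amat i j) *m XiM F q.

Definition wdeg (p : {poly F}) (k : nat) : int := ((q * (size p).-1)%N + (k * q.+1)%N)%:Z.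

Definition sol2 (lam2 psi2 : mi h l -> 'I_q -> {poly F}) (D : int) : Prop :=
  ((exists i k, inI i /\ lam2 i k != 0) \/ (exists j k, inJ j /\ psi2 j k != 0)) /\
  (exists k, lam2 (mzero h l) k != 0 /\ wdeg (lam2 (mzero h l) k) k = D) /\
  (forall k, lam2 (mzero h l) k != 0 -> wdeg (lam2 (mzero h l) k) k <= D) /\
  (forall j, inJ j -> (mnorm j < s)%N -> forall kap : 'I_q,
     psi2 j kap = \sum_(i | inI i) \sum_(k < q) lam2 i k * hatA i j k kap) /\
  (forall j, inJ j -> (s <= mnorm j)%N -> forall kap : 'I_q,
     (Gpol F q ^+ s %| psi2 j kap - \sum_(i | inI i) \sum_(k < q) lam2 i k * hatA i j k kap)%R) /\
  (forall i, inI i -> forall k, lam2 i k != 0 ->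
     wdeg (lam2 i k) k - (mnorm i)%:Z * twog1 <= D) /\
  (forall j, inJ j -> forall kap, psi2 j kap != 0 ->
     wdeg (psi2 j kap) kap - (mnorm j)%:Z * mH <= D).

Definition monic2 (lam2 : mi h l -> 'I_q -> {poly F}) (D : int) : Prop :=
  forall k, lam2 (mzero h l) k != 0 -> wdeg (lam2 (mzero h l) k) k = D ->
    lead_coef (lam2 (mzero h l) k) = 1.
End Problems.

(* Reducing modulo Y^q + Y - X^(q+1), which is monic in Y as soon as q > 1,
   identifies R with F[X]^q.  Reduction is F[X]-linear, and reducing a product
   a b only requires the reductions of Y^0, ..., Y^(2q-2), which are the rows
   of Xi; hence the coordinates of a b are those of a times mu(b) Xi, and the
   equations and congruences of the two problems correspond coordinatewise.
   On the degree side, the basis monomials of largest deg_H in the k-th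
   coordinate a_k have degree q deg a_k + k (q+1), so deg_H a is the maximum of
   these numbers over the nonzero coordinates, and the monomial of a attaining
   deg_H is the leading term of such a coordinate. *)

From mathcomp Require Import all_boot all_order all_algebra.
From mathcomp Require Import zify ring.
Import Order.TTheory GRing.Theory Num.Theory.
Set Implicit Arguments. Unset Strict Implicit.
Local Open Scope ring_scope.

Lemma sum_window (V : nmodType) (n k m : nat) (g : nat -> V) : (k + m <= n)%N ->
  \sum_(c < n) (if (k <= c < k + m)%N then g c else 0) = \sum_(t < m) g (t + k)%N.
Proof.
move=> kmn; transitivity (\sum_(k <= c < k + m) g c); last first.
  by rewrite -{1}[k]add0n big_addn addKn big_mkord.
by rewrite big_geq_mkord (big_ord_widen_cond n) // [RHS]big_mkcond.
Qed.

Lemma bigmax_poly_support (R : nzRingType) (p : {poly R}) (m c : nat) :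
  \max_(i < size p | p`_i != 0) (i * m + c)%N =
  if p == 0 then 0%N else ((size p).-1 * m + c)%N.
Proof.
have [->|p_neq0] := eqVneq p 0; first by rewrite size_poly0 big_ord0.
have last_lt : ((size p).-1 < size p)%N by rewrite prednK ?size_poly_gt0.
apply/eqP; rewrite eqn_leq; apply/andP; split.
  apply/bigmax_leqP => i _; rewrite leq_add2r leq_mul2r -ltnS prednK ?size_poly_gt0 //.
  by rewrite ltn_ord orbT.
apply: (leq_trans _ (@leq_bigmax_cond _ _ _ (Ordinal last_lt) _)) => //=.
by rewrite -lead_coefE lead_coef_eq0.
Qed.

Section VectorRepresentation.
Variables (F : fieldType) (q : nat).
Hypothesis q_gt1 : (1 < q)%N.
Implicit Types a b : {poly {poly F}}.

Lemma hermE : herm F q = 'X^q + ('X - ('X^(q.+1))%:P).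
Proof. by rewrite /herm /hY /hX -rmorphXn addrA. Qed.

Lemma size_herm_tail : size ('X - ('X^(q.+1))%:P : {poly {poly F}}) = 2%N.
Proof. exact: size_XsubC. Qed.

Lemma herm_monic : herm F q \is monic.
Proof.
by rewrite hermE monicE lead_coefDl ?lead_coefXn // size_herm_tail size_polyXn ltnS.
Qed.

Lemma size_herm : size (herm F q) = q.+1.
Proof. by rewrite hermE size_polyDl ?size_polyXn // size_herm_tail ltnS. Qed.

Lemma size_nu a : (size (nu q a) <= q)%N.
Proof.
rewrite -ltnS -size_herm Pdiv.CommonRing.ltn_rmodpN0 //.
by rewrite -size_poly_eq0 size_herm.
Qed.

Lemma nu_id a : nu q (nu q a) = nu q a.
Proof. exact: Pdiv.RingMonic.rmodp_id herm_monic _. Qed.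

Lemma nuB a b : nu q (a - b) = nu q a - nu q b.
Proof. exact: Pdiv.RingMonic.rmodpB herm_monic _ _. Qed.

Lemma nuCM (c : {poly F}) a : nu q (c%:P * a) = c%:P * nu q a.
Proof. by rewrite !mul_polyC; exact: Pdiv.RingMonic.rmodpZ herm_monic _ _. Qed.

Lemma nu_sum (I : Type) (r : seq I) (P : pred I) (f : I -> {poly {poly F}}) :
  nu q (\sum_(i <- r | P i) f i) = \sum_(i <- r | P i) nu q (f i).
Proof. exact: Pdiv.RingMonic.rmodp_sum herm_monic _ _ _ _. Qed.

Lemma nuM a b : nu q (a * b) = nu q (nu q a * nu q b).
Proof.
by rewrite /nu Pdiv.RingMonic.rmodp_mulml ?Pdiv.RingMonic.rmodp_mulmr ?herm_monic.
Qed.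

Lemma nucB a b k : nuc q (a - b) k = nuc q a k - nuc q b k.
Proof. by rewrite /nuc nuB coefB. Qed.

Lemma nu_expand a : nu q a = \sum_(k < q) (nuc q a k)%:P * 'X^k.
Proof.
rewrite -[LHS]coefK poly_def.
rewrite (big_ord_widen q (fun i => (nu q a)`_i *: 'X^i) (size_nu a)) big_mkcond /=.
apply: eq_bigr => k _; rewrite mul_polyC /nuc.
by case: ltnP => // k_ge; rewrite nth_default ?scale0r.
Qed.

Lemma nu_eq0 a : (nu q a == 0) = [forall k : 'I_q, nuc q a k == 0].
Proof.
apply/eqP/forallP => [nu0 k|nuc0]; first by rewrite /nuc nu0 coef0.
by rewrite nu_expand big1 // => k _; rewrite (eqP (nuc0 k)) mul0r.
Qed.

Lemma nuc_Xn (c : 'I_q.*2.-1) (kap : 'I_q) : nuc q 'X^c kap = XiM F q c kap.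
Proof.
rewrite mxE /nuc; case: ltnP => c_q.
  by rewrite /nu Pdiv.CommonRing.rmodp_small ?coefXn 1?eq_sym // size_polyXn size_herm.
set t := (c - q)%N.
have t2_le_q : (t.+2 <= q)%N by have := ltn_ord c; rewrite /t; lia.
have -> : 'X^c = 'X^t * herm F q + (('X^(q.+1))%:P * 'X^t - 'X^(t.+1)) :> {poly {poly F}}.
  rewrite hermE -(subnK c_q) -/t exprD (exprSr _ t).
  move: ('X^t) ('X^q) (('X^(q.+1))%:P) => A B C; ring.
rewrite /nu Pdiv.RingMonic.rmodp_addl_mul_small ?herm_monic //; last first.
  rewrite size_herm ltnS; apply: leq_trans (size_polyD _ _) _.
  rewrite geq_max size_polyN size_polyXn t2_le_q andbT.
  apply: leq_trans (size_polyMleq _ _) _; rewrite size_polyXn size_polyC.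
  by case: (_ != 0); lia.
rewrite coefB coefCM !coefXn; case: (eqVneq (kap : nat) t) => [->|kap_t] /=.
  by rewrite mulr1 (ltn_eqF (ltnSn t)) subr0.
by rewrite mulr0 sub0r; case: eqVneq; rewrite ?oppr0.
Qed.

Lemma nuc_mul a b (kap : 'I_q) :
  nuc q (a * b) kap = \sum_(k < q) nuc q a k * (muM q b *m XiM F q) k kap.
Proof.
rewrite [LHS]/nuc nuM (nu_expand a) (nu_expand b) big_distrl /= nu_sum coef_sum.
apply: eq_bigr => k _; rewrite big_distrr /= nu_sum coef_sum mxE.
have window : (k + q <= q.*2.-1)%N by have := ltn_ord k; rewrite -addnn; lia.
under [in RHS]eq_bigr => c _ do
  rewrite [muM _ _ _ _]mxE -nuc_Xn (fun_if (fun x => x * _)) mul0r.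
rewrite (sum_window (fun c => nuc q b (c - k) * nuc q 'X^c kap) window) big_distrr /=.
apply: eq_bigr => t _ /=; rewrite mulrACA -polyCM -exprD nuCM coefCM.
by rewrite addnK addnC mulrA.
Qed.

Lemma eqR_nuc a b : eqR q a b <-> forall k : 'I_q, nuc q a k = nuc q b k.
Proof.
rewrite /eqR nuB; split=> [/subr0_eq nu_ab k | nuc_ab]; first by rewrite /nuc nu_ab.
apply/eqP; rewrite subr_eq0 (nu_expand a) (nu_expand b).
by apply/eqP/eq_bigr => k _; rewrite nuc_ab.
Qed.

Lemma dvdR_polyC_nuc (g : {poly F}) a :
  dvdR q g%:P a <-> forall k : 'I_q, (g %| nuc q a k)%R.
Proof.
split=> [[c /eqR_nuc nuc_a] k | g_dvd].
  by rewrite nuc_a /nuc nuCM coefCM dvdp_mulIl.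
exists (\sum_(k < q) (nuc q a k %/ g)%:P * 'X^k).
suff -> : g%:P * \sum_(k < q) (nuc q a k %/ g)%:P * 'X^k = nu q a.
  by rewrite /eqR nuB nu_id subrr.
rewrite big_distrr (nu_expand a); apply: eq_bigr => k _.
by rewrite /= mulrA -polyCM (mulrC g) divpK.
Qed.

Definition degH_comp a (k : nat) : nat := ((size (nuc q a k)).-1 * q + k * q.+1)%N.

Lemma wdeg_nuc a k : wdeg q (nuc q a k) k = (degH_comp a k)%:Z.
Proof. by rewrite /wdeg /degH_comp mulnC. Qed.

Lemma degHE a : degH q a = \max_(k < q | nuc q a k != 0) degH_comp a k.
Proof.
rewrite /degH [RHS]big_mkcond; apply: eq_bigr => k _.
by rewrite /coefH bigmax_poly_support; case: eqP.
Qed.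

Lemma degH_comp_le a (k : 'I_q) : nuc q a k != 0 -> (degH_comp a k <= degH q a)%N.
Proof. by move=> nuc_k; rewrite degHE (leq_bigmax_cond k). Qed.

Lemma degH_attained a :
  nu q a != 0 -> exists2 k : 'I_q, nuc q a k != 0 & degH_comp a k = degH q a.
Proof.
rewrite nu_eq0 => /forallPn[k0 nuc_k0].
have [k nuc_k k_max] := @arg_maxnP _ k0 (fun k => nuc q a k != 0) (degH_comp a) nuc_k0.
exists k => //; apply/eqP; rewrite eqn_leq degH_comp_le // degHE.
exact/bigmax_leqP.
Qed.

Lemma degH_eqP a (D : nat) :
  nu q a != 0 /\ degH q a = D <->
  (exists k : 'I_q, nuc q a k != 0 /\ wdeg q (nuc q a k) k = D%:Z) /\
  (forall k : 'I_q, nuc q a k != 0 -> wdeg q (nuc q a k) k <= D%:Z).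
Proof.
split=> [[nu_a <-] | [[k0 [nuc_k0 deg_k0]] deg_le]].
  have [k nuc_k deg_k] := degH_attained nu_a.
  split; first by exists k; rewrite wdeg_nuc deg_k.
  by move=> k' nuc_k'; rewrite wdeg_nuc lez_nat degH_comp_le.
have nu_a : nu q a != 0 by rewrite nu_eq0; apply/forallPn; exists k0.
split=> //; have [k nuc_k deg_k] := degH_attained nu_a.
apply/eqP; rewrite eqn_leq -{1}deg_k -lez_nat -wdeg_nuc deg_le //=.
by rewrite -lez_nat -deg_k0 wdeg_nuc lez_nat degH_comp_le.
Qed.

Lemma degH_bound a (c D : int) :
  (nu q a != 0 -> (degH q a)%:Z - c <= D) <->
  (forall k : 'I_q, nuc q a k != 0 -> wdeg q (nuc q a k) k - c <= D).
Proof.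
split=> [deg_le k nuc_k | deg_le nu_a].
  have nu_a : nu q a != 0 by rewrite nu_eq0; apply/forallPn; exists k.
  by apply: le_trans (deg_le nu_a); rewrite lerD2r wdeg_nuc lez_nat degH_comp_le.
by have [k nuc_k <-] := degH_attained nu_a; rewrite -wdeg_nuc deg_le.
Qed.

Lemma monicR_lead a :
  monicR q a <->
  nu q a != 0 /\ forall k : 'I_q, nuc q a k != 0 ->
    wdeg q (nuc q a k) k = (degH q a)%:Z -> lead_coef (nuc q a k) = 1.
Proof.
rewrite /monicR /coefH; split=> -[nu_a lead1]; split=> //.
  move=> k nuc_k; rewrite wdeg_nuc => /eqP; rewrite eqz_nat => /eqP deg_k.
  by rewrite lead_coefE; apply: lead1; rewrite // -lead_coefE lead_coef_eq0.
move=> i k k_q coef_ik deg_ik.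
have nuc_k : nuc q a k != 0 by apply: contraNneq coef_ik => ->; rewrite coef0.
have i_lt : (i < size (nuc q a k))%N.
  by rewrite ltnNge; apply: contra coef_ik => ?; rewrite nth_default.
have i_last : i = (size (nuc q a k)).-1.
  have := @degH_comp_le a (Ordinal k_q) nuc_k.
  rewrite /= -deg_ik /degH_comp leq_add2r leq_pmul2r ?(ltnW q_gt1) // => size_le.
  by apply/eqP; rewrite eqn_leq size_le -ltnS prednK // (leq_ltn_trans _ i_lt).
rewrite i_last -lead_coefE (lead1 (Ordinal k_q)) // wdeg_nuc /degH_comp -i_last.
by rewrite deg_ik.
Qed.

End VectorRepresentation.

Section Problems.
Variables (F : fieldType) (q h l s : nat) (mH : int) (Rv : 'I_h -> {poly {poly F}}).
Hypotheses (q_gt1 : (1 < q)%N) (s_gt0 : (0 < s)%N).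
Variables (lam psi : mi h l -> {poly {poly F}}).

Local Notation lam0 := (lam (mzero h l)).
Local Notation lam2 := (fun i (k : 'I_q) => nuc q (lam i) k).
Local Notation psi2 := (fun j (k : 'I_q) => nuc q (psi j) k).

Lemma inI_mzero : inI s (mzero h l).
Proof. by rewrite /inI /mnorm big1 // => mu _; rewrite ffunE. Qed.

Lemma GbX : Gb F q ^+ s = (Gpol F q ^+ s)%:P.
Proof. by rewrite /Gb rmorphXn. Qed.

Lemma nuc_sum_Amat j (kap : 'I_q) :
  nuc q (\sum_(i | inI s i) lam i * Amat q Rv i j) kap =
  \sum_(i | inI s i) \sum_(k < q) nuc q (lam i) k * hatA q Rv i j k kap.
Proof.
by rewrite /nuc (nu_sum q_gt1) coef_sum; apply: eq_bigr => i _; apply: nuc_mul.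
Qed.

Lemma sol1_sol2 tau :
  sol1 q s mH Rv lam psi tau -> sol2 s mH Rv lam2 psi2 tau%:Z /\ monic2 lam2 tau%:Z.
Proof.
case=> /(monicR_lead q_gt1)[nu0 lead1] [eqs [dvds [lam_deg [psi_deg deg0]]]].
have [[k0 [nuc_k0 deg_k0]] deg_le] := (degH_eqP q_gt1 _ _).1 (conj nu0 deg0).
split; last by move=> k; rewrite -deg0; apply: lead1.
split; first by left; exists (mzero h l), k0; rewrite inI_mzero.
split; first by exists k0.
split=> //.
split=> [j jJ js kap | ].
  by have /(eqR_nuc q_gt1)/(_ kap) := eqs j jJ js; rewrite nuc_sum_Amat.
split=> [j jJ js kap | ].
  have := dvds j jJ js; rewrite GbX => /(dvdR_polyC_nuc q_gt1)/(_ kap).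
  by rewrite (nucB q_gt1) nuc_sum_Amat.
split=> [i iI | j jJ]; rewrite -deg0; apply/(degH_bound q_gt1).
  exact: lam_deg.
exact: psi_deg.
Qed.

Lemma sol2_sol1 tau :
  sol2 s mH Rv lam2 psi2 tau%:Z /\ monic2 lam2 tau%:Z -> sol1 q s mH Rv lam psi tau.
Proof.
case=> -[_ [deg_att [deg_le [eqs [dvds [lam_deg psi_deg]]]]]] lead1.
have [nu0 deg0] := (degH_eqP q_gt1 _ _).2 (conj deg_att deg_le).
split; first by apply/(monicR_lead q_gt1); split=> // k; rewrite deg0; apply: lead1.
split=> [j jJ js | ].
  by apply/(eqR_nuc q_gt1) => kap; rewrite nuc_sum_Amat; apply: eqs.
split=> [j jJ js | ].
  rewrite GbX; apply/(dvdR_polyC_nuc q_gt1) => kap.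
  by rewrite (nucB q_gt1) nuc_sum_Amat; apply: dvds.
split=> [i iI | ]; first by rewrite deg0; apply/(degH_bound q_gt1); apply: lam_deg.
by split=> // j jJ; rewrite deg0; apply/(degH_bound q_gt1); apply: psi_deg.
Qed.

End Problems.

Theorem theorem6
  (F : finFieldType) (q : nat)
  (Hq : exists p k : nat, [/\ prime p, (0 < k)%N & q = (p ^ k)%N])
  (HF : #|F| = (q ^ 2)%N)
  (h : nat) (Hh : (0 < h)%N)
  (mH : int)
  (HmH : ((2 * genus q)%N%:Z - 2 < mH) && (mH < (q ^ 3)%N%:Z))
  (P : 'I_(q ^ 3) -> F * F) (HPinj : injective P)
  (HPcurve : forall k, (P k).2 ^+ q + (P k).2 = (P k).1 ^+ q.+1)
  (r : 'I_h -> 'I_(q ^ 3) -> F)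
  (Rv : 'I_h -> {poly {poly F}})
  (HRdeg : forall mu, nu q (Rv mu) != 0 ->
             (degH q (Rv mu) < (q ^ 3)%N + 2 * genus q)%N)
  (HRint : forall mu k, evalP (Rv mu) (P k) = r mu k)
  (s l : nat) (Hs : (0 < s)%N) (Hsl : (s <= l)%N)
  (tau : nat)
  (lam psi : mi h l -> {poly {poly F}}) :
  sol1 q s mH Rv lam psi tau <->
  (sol2 s mH Rv (fun i (k : 'I_q) => nuc q (lam i) k) (fun j (k : 'I_q) => nuc q (psi j) k)
        tau%:Z /\
   monic2 (fun i (k : 'I_q) => nuc q (lam i) k) tau%:Z).
Proof.
have q_gt1 : (1 < q)%N.
  by case: Hq => p [k [/prime_gt1 p_gt1 k_gt0 ->]]; rewrite -(exp1n k) ltn_exp2r.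
by split; [apply: sol1_sol2 | apply: sol2_sol1].
Qed.
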